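(* Let $\mathcal{H}$ be a Hilbert space and $T\in\mathcal{B}(\mathcal{H})$ a convex operator, i.e. $T^{*2}T^2-2T^*T+I\ge0$. The following are equivalent: (i) $T$ has a $2$-isometric lifting; (ii) $T$ has a $2$-isometric lifting $S\in\mathcal{B}(\mathcal{K})$ with $\mathcal{K}\ominus\mathcal{H}\subset\operatorname{Ker}(S^*S-I)$; (iii) $\sup_{n\ge0}\frac{\|T^n\|^2}{n+1}<\infty$.
   Context: If $\mathcal{H}$ is a closed subspace of a Hilbert space $\mathcal{K}$ with orthogonal projection $P_{\mathcal{H}}$, an operator $S\in\mathcal{B}(\mathcal{K})$ is a lifting of $T\in\mathcal{B}(\mathcal{H})$ if $TP_{\mathcal{H}}=P_{\mathcal{H}}S$ (up to unitary identification of $\mathcal{H}$ with a subspace of $\mathcal{K}$). $S$ is a $2$-isometry if $S^{*2}S^2-2S^*S+I=0$. *)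

From HB Require Import structures.
From mathcomp Require Import all_boot all_order all_algebra.
From mathcomp Require Import boolp classical_sets reals.
From mathcomp Require Import complex.
Set Implicit Arguments. Unset Strict Implicit. Unset Printing Implicit Defensive.
Import Order.TTheory GRing.Theory Num.Theory.
Local Open Scope ring_scope.
Local Open Scope classical_set_scope.

(* The inner product is linear in the first argument and conjugate      *)
(* linear in the second.                                                *)

Record hilbert (R : realType) := Hilbert {
  hcarrier :> lmodType R[i];
  hinner : hcarrier -> hcarrier -> R[i];
  hinnerDl : forall (a : R[i]) (x y z : hcarrier),
    hinner (a *: x + y) z = a * hinner x z + hinner y z;
  hinner_conj : forall x y : hcarrier, hinner y x = conjc (hinner x y);
  hinner_ge0 : forall x : hcarrier, 0 <= hinner x x;
  hinner_eq0 : forall x : hcarrier, hinner x x = 0 -> x = 0;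
  hcomplete : forall u : nat -> hcarrier,
    (forall e : R, 0 < e -> exists N, forall m n, (N <= m)%N -> (N <= n)%N ->
        Num.sqrt (complex.Re (hinner (u m - u n) (u m - u n))) < e) ->
    exists l : hcarrier, forall e : R, 0 < e -> exists N, forall n, (N <= n)%N ->
        Num.sqrt (complex.Re (hinner (u n - l) (u n - l))) < e
}.

Arguments hinner {R} h _ _.

Notation "[< x , y >]" := (hinner _ x y) (format "[<  x ,  y  >]").

Definition hnorm {R : realType} {H : hilbert R} (x : H) : R :=
  Num.sqrt (complex.Re (hinner H x x)).

Definition is_linear {R : realType} {H1 H2 : hilbert R} (f : H1 -> H2) :=
  forall (a : R[i]) (x y : H1), f (a *: x + y) = a *: f x + f y.

Definition is_bounded {R : realType} {H1 H2 : hilbert R} (f : H1 -> H2) :=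
  exists M : R, forall x : H1, hnorm (f x) <= M * hnorm x.

Record bop {R : realType} (H1 H2 : hilbert R) := Bop {
  bop_fun :> H1 -> H2;
  bop_linear : is_linear bop_fun;
  bop_bounded : is_bounded bop_fun
}.

Definition is_adjoint {R : realType} {H1 H2 : hilbert R}
  (A : H1 -> H2) (S : H2 -> H1) :=
  forall (x : H1) (y : H2), hinner H2 (A x) y = hinner H1 x (S y).

(* The adjoint A^* (it exists and is unique for bounded A; we pick it by
   choice, defaulting to 0 if no adjoint exists). *)
Definition adjoint {R : realType} {H1 H2 : hilbert R} (A : H1 -> H2) : H2 -> H1 :=
  match pselect (exists S, is_adjoint A S) with
  | left e => projT1 (cid e)
  | right _ => fun _ => 0
  end.

Definition opnorm {R : realType} {H1 H2 : hilbert R} (A : H1 -> H2) : R :=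
  sup [set hnorm (A x) | x in [set x : H1 | hnorm x <= 1]].

Definition positive_op {R : realType} {H : hilbert R} (A : H -> H) :=
  forall x : H, 0 <= hinner H (A x) x.

Definition convex_op {R : realType} {H : hilbert R} (T : H -> H) :=
  let Ts := adjoint T in
  positive_op (fun x => Ts (Ts (T (T x))) - 2%:R *: Ts (T x) + x).

Definition two_isometry {R : realType} {K : hilbert R} (S : K -> K) :=
  let Ss := adjoint S in
  forall x : K, Ss (Ss (S (S x))) - 2%:R *: Ss (S x) + x = 0.

(* J : H -> K is a linear isometric embedding (identifies H with the
   closed subspace range J of K). *)
Definition isometric_embedding {R : realType} {H K : hilbert R} (J : H -> K) :=
  is_linear J /\ forall x y : H, hinner K (J x) (J y) = hinner H x y.

(* S in B(K) is a lifting of T in B(H) w.r.t. the identification J: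
   T P_H = P_H S, where P_H = J J^* is the orthogonal projection onto
   range J, and T is transported to range J via J. *)
Definition lifting_via {R : realType} {H K : hilbert R}
  (J : H -> K) (T : H -> H) (S : K -> K) :=
  isometric_embedding J /\
  forall k : K, J (T (adjoint J k)) = J (adjoint J (S k)).

Definition orth_compl_in_ker {R : realType} {H K : hilbert R}
  (J : H -> K) (S : K -> K) :=
  forall k : K, (forall h : H, hinner K k (J h) = 0) ->
    adjoint S (S k) - k = 0.

(* (i) => (iii): if S is a 2-isometric lifting of T through J, then
   T^n J^* = J^* S^n, and |S^n k|^2 is affine in n because its second
   differences vanish; hence |T^n|^2 = O(n).
   (iii) => (ii): convexity of T says that D = T^*2 T^2 - 2 T^* T + I >= 0, i.e.
   that a_n = |T^n h|^2 is a convex sequence. As a_n = O(n |h|^2), its increments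
   are O(|h|^2), so the telescoping sums sum_(n < N) <D T^n h, T^n h> stay
   bounded. Factoring D = Y^* Y through l2(H), the map Z h = (Y T^n h)_n is
   bounded, |Z h|^2 = <D h, h> + |Z (T h)|^2, and
   S (h, g) = (T h, (Z h, g_0, g_1, ...)) on H (+) l2(l2(l2(H))) is a
   2-isometric lifting of T that is isometric on the second summand.
   (ii) => (i) is trivial. *)

From HB Require Import structures.
From mathcomp Require Import all_boot all_order all_algebra.
From mathcomp Require Import boolp classical_sets reals complex.
From mathcomp Require Import topology normedtype sequences.
From mathcomp Require Import ring lra.
Import Order.TTheory GRing.Theory Num.Theory.
Import numFieldNormedType.Exports.

Set Implicit Arguments.
Unset Strict Implicit.
Unset Printing Implicit Defensive.

Local Open Scope ring_scope.
Local Open Scope complex_scope.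
Local Open Scope classical_set_scope.

Local Notation Re := complex.Re.
Local Notation Im := complex.Im.

Section ComplexFacts.
Variable R : realType.
Implicit Types a b : R[i].

Lemma ReM a b : Re (a * b) = Re a * Re b - Im a * Im b.
Proof. by case: a => ? ?; case: b => ? ?; simpc. Qed.

Lemma ImM a b : Im (a * b) = Re a * Im b + Im a * Re b.
Proof. by case: a => ? ?; case: b => ? ? /=; ring. Qed.

Lemma ReJ a : Re a^* = Re a. Proof. by case: a. Qed.

Lemma ImJ a : Im a^* = - Im a. Proof. by case: a. Qed.

Lemma Re_nat n : Re (n%:R : R[i]) = n%:R.
Proof. by rewrite raddfMn. Qed.

Lemma Im_nat n : Im (n%:R : R[i]) = 0.
Proof. by rewrite raddfMn /= mul0rn. Qed.

Lemma Re_mulC (r : R) a : Re (r%:C * a) = r * Re a.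
Proof. by rewrite ReM /= mul0r subr0. Qed.

Lemma complexP a b : Re a = Re b -> Im a = Im b -> a = b.
Proof. by case: a => ? ?; case: b => ? ? /= -> ->. Qed.

End ComplexFacts.

Section RealFacts.
Variable F : realFieldType.

Lemma quadratic_ge0 (a b c : F) : 0 <= c ->
  (forall t, 0 <= a + 2 * t * b + t ^+ 2 * c) -> b ^+ 2 <= a * c.
Proof.
move=> c0 q; have [c_gt0|] := ltrP 0 c.
  have := q (- b / c); rewrite -subr_ge0.
  have -> : a + 2 * (- b / c) * b + (- b / c) ^+ 2 * c - 0 = (a * c - b ^+ 2) / c.
    by field; rewrite gt_eqF.
  by rewrite pmulr_lge0 ?invr_gt0 // subr_ge0.
move=> c_le0; have c_eq0 : c = 0 by apply: le_anti; rewrite c_le0 c0.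
rewrite c_eq0 mulr0 in q *; have [->|b0] := eqVneq b 0; first by rewrite expr0n.
have := q (- (`|a| + 1) / (2 * b)).
have -> : a + 2 * (- (`|a| + 1) / (2 * b)) * b + (- (`|a| + 1) / (2 * b)) ^+ 2 * 0
          = a - `|a| - 1 by field.
by have := ler_norm a; lra.
Qed.

Lemma second_difference_eq0 (a : nat -> F) : (forall n, a n.+2 - 2 * a n.+1 + a n = 0) ->
  forall n, a n = a 0%N + n%:R * (a 1%N - a 0%N).
Proof.
move=> a2; have step n : a n.+1 - a n = a 1%N - a 0%N.
  by elim: n => // n <-; have := a2 n; lra.
elim=> [|n IH]; first by rewrite mul0r addr0.
by have := step n; rewrite -natr1 IH; lra.
Qed.

(* Convexity gives (N + 1) (a_(N+1) - a_N) <= a_(2N+1) - a_N <= 2 c (N + 1). *)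
Lemma convex_seq_step_le (a : nat -> F) (c : F) :
  (forall n, a n.+1 - a n <= a n.+2 - a n.+1) -> (forall n, 0 <= a n) ->
  (forall n, a n <= c * n.+1%:R) -> forall N, a N.+1 - a N <= 2 * c.
Proof.
move=> a_convex a_ge0 a_le N; set d := fun n => a n.+1 - a n.
have d_mono : {homo d : m n / (m <= n)%N >-> m <= n} by apply/nondecreasing_seqP.
have : d N *+ N.+1 <= a (N + N.+1)%N - a N.
  rewrite -(telescope_sumr a (leq_addr _ _)) -[in X in _ *+ X](addKn N N.+1).
  by rewrite -sumr_const_nat; apply: ler_sum_nat => k /andP[Nk _]; exact: d_mono.
rewrite -mulr_natr => dN; rewrite -(ler_pM2r (ltr0Sn F N)).
have := a_le (N + N.+1)%N; have -> : (N + N.+1).+1%:R = 2 * N.+1%:R :> F.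
  by rewrite -natrM mul2n -addnn addSn addnS.
by have := a_ge0 N; rewrite /d in dN; lra.
Qed.

End RealFacts.

Section InnerProduct.
Variables (R : realType) (H : hilbert R).
Implicit Types (x y z : H) (a : R[i]).

Lemma ipDl x y z : [< x + y, z >] = [< x, z >] + [< y, z >].
Proof. by have := hinnerDl 1 x y z; rewrite scale1r mul1r. Qed.

Lemma ip0l z : [< 0 : H, z >] = 0.
Proof. by apply: (addrI [< 0 : H, z >]); rewrite -ipDl !addr0. Qed.

Lemma ipZl a x z : [< a *: x, z >] = a * [< x, z >].
Proof. by have := hinnerDl a x 0 z; rewrite addr0 ip0l addr0. Qed.

Lemma ipNl x z : [< - x, z >] = - [< x, z >].
Proof. by rewrite -scaleN1r ipZl mulN1r. Qed.

Lemma ipBl x y z : [< x - y, z >] = [< x, z >] - [< y, z >].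
Proof. by rewrite ipDl ipNl. Qed.

Lemma ipC x y : [< y, x >] = [< x, y >]^*.
Proof. exact: hinner_conj. Qed.

Lemma ipDr x y z : [< z, x + y >] = [< z, x >] + [< z, y >].
Proof. by rewrite ipC ipDl rmorphD /= -!ipC. Qed.

Lemma ipZr a x z : [< z, a *: x >] = a^* * [< z, x >].
Proof. by rewrite ipC ipZl rmorphM /= -!ipC. Qed.

Lemma ip0r z : [< z, 0 : H >] = 0.
Proof. by rewrite ipC ip0l conjc0. Qed.

Lemma ipNr x z : [< z, - x >] = - [< z, x >].
Proof. by rewrite -scaleN1r ipZr rmorphN1 mulN1r. Qed.

Lemma ipBr x y z : [< z, x - y >] = [< z, x >] - [< z, y >].
Proof. by rewrite ipDr ipNr. Qed.

Lemma Re_ipC x y : Re [< y, x >] = Re [< x, y >].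
Proof. by rewrite ipC ReJ. Qed.

Lemma Re_ipZr_i x y : Re [< x, 'i *: y >] = Im [< x, y >].
Proof. by rewrite ipZr ReM /=; ring. Qed.

Lemma Re_ipZl (r : R) x y : Re [< r%:C *: x, y >] = r * Re [< x, y >].
Proof. by rewrite ipZl Re_mulC. Qed.

Lemma Re_ipZr (r : R) x y : Re [< x, r%:C *: y >] = r * Re [< x, y >].
Proof. by rewrite ipZr ReM ReJ ImJ /=; ring. Qed.

Lemma ip_inj x y : (forall z, [< z, x >] = [< z, y >]) -> x = y.
Proof.
move=> exy; apply/eqP; rewrite -subr_eq0; apply/eqP/hinner_eq0.
by rewrite ipBr exy subrr.
Qed.

Lemma ip_injl x y : (forall z, [< x, z >] = [< y, z >]) -> x = y.
Proof. by move=> exy; apply: ip_inj => z; rewrite ipC exy -ipC. Qed.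

Definition sqnorm x : R := Re [< x, x >].

Lemma sqnorm_ge0 x : 0 <= sqnorm x.
Proof. by have := hinner_ge0 x; rewrite lecE => /andP[]. Qed.

Lemma ip_self x : [< x, x >] = (sqnorm x)%:C.
Proof. by have := hinner_ge0 x; rewrite lecE => /andP[/eqP Im0 _]; apply: complexP. Qed.

Lemma sqnorm_eq0 x : sqnorm x = 0 -> x = 0.
Proof. by move=> x0; apply: hinner_eq0; rewrite ip_self x0. Qed.

Lemma sqnorm0 : sqnorm 0 = 0.
Proof. by rewrite /sqnorm ip0l. Qed.

Lemma sqnormD x y : sqnorm (x + y) = sqnorm x + sqnorm y + 2 * Re [< x, y >].
Proof. by rewrite /sqnorm !ipDl !ipDr !raddfD /= Re_ipC; ring. Qed.

Lemma sqnormN x : sqnorm (- x) = sqnorm x.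
Proof. by rewrite /sqnorm ipNl ipNr opprK. Qed.

Lemma sqnormB x y : sqnorm (x - y) = sqnorm x + sqnorm y - 2 * Re [< x, y >].
Proof. by rewrite sqnormD sqnormN ipNr raddfN /=; ring. Qed.

Lemma sqnormBC x y : sqnorm (x - y) = sqnorm (y - x).
Proof. by rewrite -sqnormN opprB. Qed.

Lemma sqnormZ a x : sqnorm (a *: x) = (Re a ^+ 2 + Im a ^+ 2) * sqnorm x.
Proof. by rewrite /sqnorm ipZl ipZr ip_self !ReM !ImM ReJ ImJ /=; ring. Qed.

Lemma sqnormZr (r : R) x : sqnorm (r%:C *: x) = r ^+ 2 * sqnorm x.
Proof. by rewrite sqnormZ /= expr0n addr0. Qed.

Lemma sqnormD_le2 x y : sqnorm (x + y) <= 2 * sqnorm x + 2 * sqnorm y.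
Proof. by have := sqnormD x y; have := sqnormB x y; have := sqnorm_ge0 (x - y); lra. Qed.

Lemma Re_ip_sqr_le x y : Re [< x, y >] ^+ 2 <= sqnorm x * sqnorm y.
Proof.
have [->|y0] := eqVneq y 0; first by rewrite ip0r sqnorm0 expr0n mulr0.
have ny : 0 < sqnorm y by rewrite lt_def sqnorm_ge0 andbT; apply: contra y0 => /eqP/sqnorm_eq0 ->.
pose t := Re [< x, y >] / sqnorm y.
have := sqnorm_ge0 (x - t%:C *: y).
rewrite sqnormB sqnormZr ipZr ReM ReJ ImJ /= oppr0 mul0r subr0.
rewrite -(ler_pM2r ny) mul0r /t; set s := sqnorm y; set r := Re _.
have -> : (sqnorm x + (r / s) ^+ 2 * s - 2 * (r / s * r)) * s = sqnorm x * s - r ^+ 2.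
  by field; rewrite gt_eqF.
by rewrite subr_ge0.
Qed.

Lemma ip_sqr_le x y : Re [< x, y >] ^+ 2 + Im [< x, y >] ^+ 2 <= sqnorm x * sqnorm y.
Proof.
set w := [< x, y >].
have := Re_ip_sqr_le x (w *: y); rewrite ipZr sqnormZ -/w ReM ReJ ImJ.
have -> : Re w * Re w - - Im w * Im w = Re w ^+ 2 + Im w ^+ 2 by ring.
set s := Re w ^+ 2 + Im w ^+ 2 => h.
have [s0|s_gt0] := eqVneq s 0; first by rewrite s0 mulr_ge0 ?sqnorm_ge0.
have sp : 0 < s by rewrite lt_def s_gt0 addr_ge0 ?sqr_ge0.
rewrite -(ler_pM2l sp) mulrA -expr2; by move: h; rewrite mulrCA mulrA.
Qed.

Lemma hnormE x : hnorm x = Num.sqrt (sqnorm x). Proof. by []. Qed.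

Lemma hnorm_ge0 x : 0 <= hnorm x. Proof. exact: sqrtr_ge0. Qed.

Lemma sqr_hnorm x : hnorm x ^+ 2 = sqnorm x.
Proof. by rewrite sqr_sqrtr // sqnorm_ge0. Qed.

Lemma hnorm0 : hnorm (0 : H) = 0.
Proof. by rewrite hnormE sqnorm0 sqrtr0. Qed.

Lemma hnormN x : hnorm (- x) = hnorm x.
Proof. by rewrite !hnormE sqnormN. Qed.

Lemma hnormZr (r : R) x : hnorm (r%:C *: x) = `|r| * hnorm x.
Proof. by rewrite !hnormE sqnormZr sqrtrM ?sqr_ge0 // sqrtr_sqr. Qed.

Lemma Re_ip_le x y : Re [< x, y >] <= hnorm x * hnorm y.
Proof.
have := Re_ip_sqr_le x y; rewrite -!sqr_hnorm -exprMn.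
by have := mulr_ge0 (hnorm_ge0 x) (hnorm_ge0 y); nra.
Qed.

Lemma hnormB_le x y : `| hnorm x - hnorm y | <= hnorm (x - y).
Proof.
rewrite -ler_sqr ?nnegrE ?normr_ge0 ?hnorm_ge0 // -normrX ger0_norm ?sqr_ge0 //.
rewrite sqr_hnorm sqnormB sqrrB !sqr_hnorm.
by have := Re_ip_le x y; lra.
Qed.

End InnerProduct.

Section LinearMaps.
Variables (R : realType) (H1 H2 : hilbert R) (f : H1 -> H2).
Hypothesis f_lin : is_linear f.

Lemma is_linearD x y : f (x + y) = f x + f y.
Proof. by have := f_lin 1 x y; rewrite !scale1r. Qed.

Lemma is_linear0 : f 0 = 0.
Proof. by apply: (addrI (f 0)); rewrite -is_linearD !addr0. Qed.

Lemma is_linearZ a x : f (a *: x) = a *: f x.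
Proof. by have := f_lin a x 0; rewrite !addr0 is_linear0 addr0. Qed.

Lemma is_linearN x : f (- x) = - f x.
Proof. by rewrite -scaleN1r is_linearZ scaleN1r. Qed.

Lemma is_linearB x y : f (x - y) = f x - f y.
Proof. by rewrite is_linearD is_linearN. Qed.

End LinearMaps.

Section BoundedMaps.
Variables (R : realType) (H1 H2 : hilbert R).
Implicit Types A : H1 -> H2.

Lemma is_boundedP A :
  is_bounded A <-> exists C, 0 <= C /\ forall x, sqnorm (A x) <= C * sqnorm x.
Proof.
split=> [[M hM]|[C [C0 hC]]].
  exists (M ^+ 2); split=> [|x]; first exact: sqr_ge0.
  rewrite -!sqr_hnorm -exprMn.
  by have := hM x; have := hnorm_ge0 (A x); rewrite !expr2; nra.
exists (Num.sqrt C) => x; rewrite !hnormE -sqrtrM // ler_sqrt ?hC //.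
by rewrite mulr_ge0 ?sqnorm_ge0.
Qed.

End BoundedMaps.

Section Iterates.
Variables (R : realType) (H : hilbert R) (T : H -> H).

Lemma iter_linear n : is_linear T -> is_linear (iter n T).
Proof. by move=> T_lin; elim: n => [|n IH] a x y //=; rewrite IH T_lin. Qed.

Lemma iter_bounded n : is_bounded T -> is_bounded (iter n T).
Proof.
move=> /is_boundedP [C [C0 TC]]; apply/is_boundedP.
elim: n => [|n [D [D0 TD]]]; first by exists 1; split=> // x; rewrite mul1r.
exists (C * D); split=> [|x /=]; first exact: mulr_ge0.
by apply: le_trans (TC _) _; rewrite -mulrA ler_wpM2l.
Qed.

End Iterates.

Section Convergence.
Variables (R : realType) (H : hilbert R).
Implicit Types (u : nat -> H) (x l : H).

Lemma hnorm_lt x (e : R) : 0 < e -> (hnorm x < e) = (sqnorm x < e ^+ 2).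
Proof. by move=> e0; rewrite -sqr_hnorm ltr_pXn2r ?nnegrE ?hnorm_ge0 ?ltW. Qed.

Lemma hilbert_cvg u :
  (forall e : R, 0 < e -> exists N, forall m n, (N <= m)%N -> (N <= n)%N ->
     sqnorm (u m - u n) < e) ->
  exists l, hnorm (u n - l) @[n --> \oo] --> 0.
Proof.
move=> u_cauchy; have [l ul] : exists l, forall e, 0 < e ->
    exists N, forall n, (N <= n)%N -> hnorm (u n - l) < e.
  apply: hcomplete => e e0; have [N hN] := u_cauchy _ (exprn_gt0 2 e0).
  by exists N => m n mN nN; rewrite -/(hnorm _) hnorm_lt // hN.
exists l; apply/cvgr0Pnorm_lt => e e0; have [N hN] := ul e e0.
by exists N => // n /hN; rewrite ger0_norm ?hnorm_ge0.
Qed.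

Lemma cvg_hnorm u l : hnorm (u n - l) @[n --> \oo] --> 0 ->
  hnorm (u n) @[n --> \oo] --> hnorm l.
Proof.
move=> ul; apply/cvgrPdist_le => e e0; move/cvgr0Pnorm_le : ul => /(_ e e0).
apply: filterS => n; rewrite ger0_norm ?hnorm_ge0 // distrC.
exact: le_trans (hnormB_le _ _).
Qed.

Lemma cvg_sqnorm u l : hnorm (u n - l) @[n --> \oo] --> 0 ->
  sqnorm (u n) @[n --> \oo] --> sqnorm l.
Proof.
move=> /cvg_hnorm ul; rewrite -sqr_hnorm expr2.
by apply: cvg_trans (cvgM ul ul) => /=; under eq_fun do rewrite -sqr_hnorm expr2.
Qed.

End Convergence.

(** * Riesz representation and adjoints *)

Section Riesz.
Variables (R : realType) (H : hilbert R) (f : H -> R[i]) (C : R).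
Hypothesis f_lin : forall a (x y : H), f (a *: x + y) = a * f x + f y.
Hypothesis f_bounded : forall x, Re (f x) ^+ 2 + Im (f x) ^+ 2 <= C * sqnorm x.

Let fD x y : f (x + y) = f x + f y.
Proof. by have := f_lin 1 x y; rewrite scale1r mul1r. Qed.

Let f0 : f 0 = 0.
Proof. by apply: (addrI (f 0)); rewrite -fD !addr0. Qed.

Let fZ a x : f (a *: x) = a * f x.
Proof. by have := f_lin a x 0; rewrite !addr0 f0 addr0. Qed.

Let fB x y : f (x - y) = f x - f y.
Proof. by rewrite fD -scaleN1r fZ mulN1r. Qed.

Let level_sqnorms := [set sqnorm x | x in [set x | f x = 1]].
Let d := inf level_sqnorms.

Let d_le x : f x = 1 -> d <= sqnorm x.
Proof.
move=> fx; apply: ge_inf; last by exists x.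
by exists 0 => _ [y _ <-]; exact: sqnorm_ge0.
Qed.

(* The parallelogram law applied to [a] and [b], whose midpoint also lies on [f = 1]. *)
Let level_sqnormB a b : f a = 1 -> f b = 1 ->
  sqnorm (a - b) <= 2 * (sqnorm a - d) + 2 * (sqnorm b - d).
Proof.
move=> fa fb; have fm : f ((2^-1)%:C *: (a + b)) = 1.
  rewrite fZ fD fa fb; apply: complexP => /=.
    by rewrite mul0r subr0 mulVf ?pnatr_eq0.
  by rewrite !(addr0, mulr0, mul0r).
have := d_le fm; rewrite sqnormZr.
by have := sqnormD a b; have := sqnormB a b; lra.
Qed.

Let f_cvg u x : hnorm (u n - x) @[n --> \oo] --> 0 -> (forall n, f (u n) = 1) -> f x = 1.
Proof.
move=> ux fu; set w := f x - 1.
suff w0 : Re w ^+ 2 + Im w ^+ 2 <= 0.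
  apply/eqP; rewrite -subr_eq0 -/w; apply/eqP.
  by apply: complexP; have := sqr_ge0 (Re w); have := sqr_ge0 (Im w); rewrite /=; nra.
have C_ux : C * hnorm (u n - x) ^+ 2 @[n --> \oo] --> C * 0 ^+ 2.
  by apply: cvgM; [exact: cvg_cst | rewrite expr2; exact: cvgM].
rewrite expr0n mulr0 in C_ux; apply: (ler_cvg_to (cvg_cst _) C_ux).
near=> n; rewrite /w -(fu n) -fB sqr_hnorm sqnormBC; exact: f_bounded.
Unshelve. all: end_near.
Qed.

Lemma exists_level_min_sqnorm : (exists x0, f x0 = 1) ->
  exists2 z, f z = 1 & forall x, f x = 1 -> sqnorm z <= sqnorm x.
Proof.
move=> [x0 fx0].
have d_inf : has_inf level_sqnorms.
  by split; [exists (sqnorm x0), x0 | exists 0 => _ [y _ <-]; exact: sqnorm_ge0].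
have /choice [u /all_and2 [fu ud]] :
    forall n, exists x, f x = 1 /\ sqnorm x < d + n.+1%:R^-1.
  move=> n; have [_ [x fx <-] xd] := inf_adherent (harmonic_gt0 n) d_inf.
  by exists x.
have [z uz] : exists z, hnorm (u n - z) @[n --> \oo] --> 0.
  apply: hilbert_cvg => e e0; have [N Ne] : exists N, 0 + N.+1%:R^-1 < e / 4.
    by apply: ltr_add_invr; lra.
  have near_d k : (N <= k)%N -> sqnorm (u k) - d < e / 4.
    move=> kN; rewrite ltrBlDl; apply: (lt_le_trans (ud k)); rewrite lerD2l.
    by apply: le_trans (ltW Ne); rewrite add0r lef_pV2 ?posrE ?ler_nat.
  exists N => m n mN nN; apply: le_lt_trans (level_sqnormB (fu m) (fu n)) _.
  by have := near_d m mN; have := near_d n nN; lra.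
exists z; first exact: f_cvg uz fu.
move=> x fx; apply: le_trans (d_le fx); rewrite -[d]addr0.
apply: (ler_cvg_to (cvg_sqnorm uz) (cvgD (cvg_cst d) cvg_harmonic)).
by near=> n; apply: ltW.
Unshelve. all: end_near.
Qed.

Lemma level_min_orthogonal z : f z = 1 ->
  (forall x, f x = 1 -> sqnorm z <= sqnorm x) ->
  forall x, f x = 0 -> [< x, z >] = 0.
Proof.
move=> fz zmin.
have Re0 x : f x = 0 -> Re [< z, x >] = 0.
  move=> fx; have : Re [< z, x >] ^+ 2 <= 0 * sqnorm x.
    apply: quadratic_ge0 (sqnorm_ge0 x) _ => t.
    have := zmin (z + t%:C *: x); rewrite fD fZ fx mulr0 addr0 => /(_ fz).
    by rewrite sqnormD sqnormZr ipZr ReM /=; lra.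
  by rewrite mul0r => le0; apply/eqP; rewrite -sqrf_eq0 eq_le le0 sqr_ge0.
move=> x fx; rewrite ipC; apply: complexP; rewrite /= ?ReJ ?ImJ; first exact: Re0.
by rewrite -Re_ipZr_i Re0 ?oppr0 // fZ fx mulr0.
Qed.

Theorem riesz_representation : exists y, forall x, f x = [< x, y >].
Proof.
have [[x0 fx0]|f_eq0] := pselect (exists x0, f x0 != 0); last first.
  by exists 0 => x; rewrite ip0r; apply: contrapT => fx; apply: f_eq0; exists x; apply/eqP.
have [z fz zmin] : exists2 z, f z = 1 & forall x, f x = 1 -> sqnorm z <= sqnorm x.
  by apply: exists_level_min_sqnorm; exists ((f x0)^-1 *: x0); rewrite fZ mulVf.
have z_orth := level_min_orthogonal fz zmin.
have z0 : sqnorm z != 0.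
  by apply: contra_eq_neq fz => /sqnorm_eq0 ->; rewrite f0 eq_sym oner_neq0.
exists ((sqnorm z)^-1%:C *: z) => x.
have /z_orth : f (x - f x *: z) = 0 by rewrite fB fZ fz mulr1 subrr.
rewrite ipBl ipZl ip_self => /eqP; rewrite subr_eq0 => /eqP xz.
by rewrite ipZr xz; apply: complexP; rewrite !(ReM, ImM, ReJ, ImJ) /=; field.
Qed.

End Riesz.

Section Adjoint.
Variables (R : realType) (H1 H2 : hilbert R).
Implicit Types (A : H1 -> H2) (S : H2 -> H1).

Lemma adjoint_exists A : is_linear A -> is_bounded A -> exists S, is_adjoint A S.
Proof.
move=> A_lin /is_boundedP [C [C0 AC]].
suff /choice [S AS] : forall y, exists y', forall x, [< A x, y >] = [< x, y' >].
  by exists S.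
move=> y; apply: (@riesz_representation _ _ _ (C * sqnorm y)).
  by move=> a x z; rewrite A_lin ipDl ipZl.
move=> x; apply: le_trans (ip_sqr_le _ _) _.
by rewrite mulrAC ler_wpM2r ?sqnorm_ge0.
Qed.

Lemma adjointP A : is_linear A -> is_bounded A -> is_adjoint A (adjoint A).
Proof.
move=> A_lin A_bd; rewrite /adjoint; case: pselect => [e|[]].
  exact: projT2 (cid e).
exact: adjoint_exists.
Qed.

Lemma adjoint_uniq A S1 S2 : is_adjoint A S1 -> is_adjoint A S2 -> S1 =1 S2.
Proof. by move=> AS1 AS2 y; apply: ip_inj => x; rewrite -AS1 -AS2. Qed.

Lemma adjointE A S : is_linear A -> is_bounded A -> is_adjoint A S -> adjoint A =1 S.
Proof. by move=> A_lin A_bd; apply: adjoint_uniq; exact: adjointP. Qed.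

Lemma is_adjointC A S : is_adjoint A S -> forall y x, [< S y, x >] = [< y, A x >].
Proof. by move=> AS y x; rewrite ipC -AS -ipC. Qed.

End Adjoint.

Section OperatorNorm.
Variables (R : realType) (H1 H2 : hilbert R) (A : H1 -> H2).
Hypotheses (A_lin : is_linear A) (A_bd : is_bounded A).

Let ball1_image := [set hnorm (A x) | x in [set x : H1 | hnorm x <= 1]].

Let ball1_image_has_sup : has_sup ball1_image.
Proof.
move: A_bd => [M AM]; split; first by exists (hnorm (A 0)), 0; rewrite //= hnorm0.
exists `|M| => _ [x /= x1 <-]; apply: (le_trans (AM x)).
apply: (le_trans (ler_wpM2r (hnorm_ge0 x) (ler_norm M))).
by rewrite -[leRHS]mulr1 ler_wpM2l.
Qed.

Lemma opnorm_ge0 : 0 <= opnorm A.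
Proof.
apply: le_trans (hnorm_ge0 (A 0)) _; apply: sup_upper_bound => //.
by exists 0; rewrite //= hnorm0.
Qed.

Lemma opnorm_ub x : hnorm (A x) <= opnorm A * hnorm x.
Proof.
have [/sqnorm_eq0 ->|x0] := eqVneq (sqnorm x) 0.
  by rewrite (is_linear0 A_lin) !hnorm0 mulr0.
have xp : 0 < hnorm x by rewrite sqrtr_gt0 lt_def x0 sqnorm_ge0.
have : hnorm (A ((hnorm x)^-1%:C *: x)) <= opnorm A.
  apply: sup_upper_bound => //; exists ((hnorm x)^-1%:C *: x) => //=.
  by rewrite hnormZr ger0_norm ?invr_ge0 ?hnorm_ge0 // mulVf ?gt_eqF.
rewrite (is_linearZ A_lin) hnormZr ger0_norm ?invr_ge0 ?hnorm_ge0 //.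
by rewrite ler_pdivrMl // mulrC.
Qed.

Lemma opnorm_le c : 0 <= c -> (forall x, hnorm (A x) <= c * hnorm x) -> opnorm A <= c.
Proof.
move=> c0 Ac; apply: ge_sup; first by exists (hnorm (A 0)), 0; rewrite //= hnorm0.
by move=> _ [x /= x1 <-]; apply: le_trans (Ac x) _; rewrite -[leRHS]mulr1 ler_wpM2l.
Qed.

Lemma sqnorm_le_opnorm x : sqnorm (A x) <= opnorm A ^+ 2 * sqnorm x.
Proof.
rewrite -!sqr_hnorm -exprMn ler_sqr ?nnegrE ?mulr_ge0 ?hnorm_ge0 ?opnorm_ge0 //.
exact: opnorm_ub.
Qed.

Lemma opnorm_sqr_le c : 0 <= c -> (forall x, sqnorm (A x) <= c * sqnorm x) ->
  opnorm A ^+ 2 <= c.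
Proof.
move=> c0 Ac; rewrite -(sqr_sqrtr c0) ler_sqr ?nnegrE ?sqrtr_ge0 ?opnorm_ge0 //.
apply: opnorm_le => [|x]; first exact: sqrtr_ge0.
by rewrite !hnormE -sqrtrM // ler_sqrt ?mulr_ge0 ?sqnorm_ge0.
Qed.

End OperatorNorm.

(** * The Hilbert spaces l2(E) and H (+) G *)

Section L2.
Variables (R : realType) (E : hilbert R).
Implicit Types (u v : nat -> E) (N : nat).

Definition psum u N := \sum_(k < N) sqnorm (u k).

Definition square_summable u := exists C, forall N, psum u N <= C.

Record l2 := L2 { l2seq :> nat -> E; l2seqP : square_summable l2seq }.

Lemma l2_ext (x y : l2) : x =1 y -> x = y.
Proof.
case: x y => [u uP] [v vP] /= /funext uv; subst v.
by rewrite (Prop_irrelevance uP vP).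
Qed.

HB.instance Definition _ := gen_eqMixin l2.
HB.instance Definition _ := gen_choiceMixin l2.

Lemma psum_ge0 u N : 0 <= psum u N.
Proof. by apply: sumr_ge0 => k _; exact: sqnorm_ge0. Qed.

Lemma psumS u N : psum u N.+1 = psum u N + sqnorm (u N).
Proof. by rewrite /psum big_ord_recr. Qed.

Lemma psum_nondecreasing u : nondecreasing_seq (psum u).
Proof. by apply/nondecreasing_seqP => N; rewrite psumS lerDl sqnorm_ge0. Qed.

Lemma psumD_le u v N : psum (u \+ v) N <= 2 * psum u N + 2 * psum v N.
Proof.
by rewrite /psum !mulr_sumr -big_split ler_sum // => k _; exact: sqnormD_le2.
Qed.

Lemma psumZ a u N : psum (fun k => a *: u k) N = (Re a ^+ 2 + Im a ^+ 2) * psum u N.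
Proof. by rewrite /psum mulr_sumr; apply: eq_bigr => k _; rewrite sqnormZ. Qed.

Lemma square_summableD u v :
  square_summable u -> square_summable v -> square_summable (u \+ v).
Proof.
move=> [Cu hu] [Cv hv]; exists (2 * Cu + 2 * Cv) => N.
by apply: le_trans (psumD_le u v N) _; have := hu N; have := hv N; lra.
Qed.

Lemma square_summableZ a u : square_summable u -> square_summable (fun k => a *: u k).
Proof.
move=> [C hC]; exists ((Re a ^+ 2 + Im a ^+ 2) * C) => N.
by rewrite psumZ ler_wpM2l ?addr_ge0 ?sqr_ge0.
Qed.

Lemma square_summableN u : square_summable u -> square_summable (fun k => - u k).
Proof.
move=> [C hC]; exists C => N; rewrite /psum; under eq_bigr do rewrite sqnormN.
exact: hC.
Qed.

Lemma square_summable0 : square_summable (fun=> 0 : E).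
Proof. by exists 0 => N; rewrite /psum big1 // => k _; exact: sqnorm0. Qed.

Definition l2add (x y : l2) := L2 (square_summableD (l2seqP x) (l2seqP y)).
Definition l2scale a (x : l2) := L2 (square_summableZ a (l2seqP x)).
Definition l2opp (x : l2) := L2 (square_summableN (l2seqP x)).
Definition l2zero := L2 square_summable0.

Lemma l2addA : associative l2add.
Proof. by move=> x y z; apply: l2_ext => k /=; rewrite addrA. Qed.
Lemma l2addC : commutative l2add.
Proof. by move=> x y; apply: l2_ext => k /=; rewrite addrC. Qed.
Lemma l2add0 : left_id l2zero l2add.
Proof. by move=> x; apply: l2_ext => k /=; rewrite add0r. Qed.
Lemma l2addN : left_inverse l2zero l2opp l2add.
Proof. by move=> x; apply: l2_ext => k /=; rewrite addNr. Qed.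

HB.instance Definition _ := GRing.isZmodule.Build l2 l2addA l2addC l2add0 l2addN.

Lemma l2scaleA a b x : l2scale a (l2scale b x) = l2scale (a * b) x.
Proof. by apply: l2_ext => k /=; rewrite scalerA. Qed.
Lemma l2scale1 : left_id 1 l2scale.
Proof. by move=> x; apply: l2_ext => k /=; rewrite scale1r. Qed.
Lemma l2scaleDr : right_distributive l2scale +%R.
Proof. by move=> a x y; apply: l2_ext => k /=; rewrite scalerDr. Qed.
Lemma l2scaleDl x : {morph l2scale^~ x : a b / a + b}.
Proof. by move=> a b; apply: l2_ext => k /=; rewrite scalerDl. Qed.

HB.instance Definition _ :=
  GRing.Zmodule_isLmodule.Build R[i] l2 l2scaleA l2scale1 l2scaleDr l2scaleDl.

Lemma psum_cvg (x : l2) : cvgn (psum x).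
Proof.
apply: nondecreasing_is_cvgn; first exact: psum_nondecreasing.
by have [C hC] := l2seqP x; exists C => _ [N _ <-].
Qed.

Definition re_psum u v N := \sum_(k < N) Re [< u k, v k >].

Lemma re_psum_polar u v N :
  re_psum u v N = 4^-1 * (psum (u \+ v) N - psum (u \- v) N).
Proof.
rewrite /re_psum /psum -sumrB mulr_sumr; apply: eq_bigr => k _ /=.
by rewrite sqnormD sqnormB; field.
Qed.

Lemma re_psum_cvg (x y : l2) : cvgn (re_psum x y).
Proof.
have -> : re_psum x y = fun N => 4^-1 * (psum (x + y) N - psum (x - y) N).
  by apply/funext => N; rewrite re_psum_polar.
by apply: is_cvgM; [exact: is_cvg_cst | apply: is_cvgB; exact: psum_cvg].
Qed.

Definition l2re (x y : l2) := limn (re_psum x y).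

(* Both parts are limits of real partial sums, since Im <a, b> = Re <a, 'i b>. *)
Definition l2ip (x y : l2) : R[i] := l2re x y +i* l2re x ('i *: y).

Lemma re_psum_linl a (x y z : l2) N : re_psum (a *: x + y) z N =
  Re a * re_psum x z N - Im a * re_psum x ('i *: z) N + re_psum y z N.
Proof.
rewrite /re_psum !mulr_sumr -sumrB -big_split; apply: eq_bigr => k _ /=.
by rewrite ipDl ipZl raddfD /= ReM Re_ipZr_i.
Qed.

Lemma re_psum_linl_i a (x y z : l2) N : re_psum (a *: x + y) ('i *: z) N =
  Re a * re_psum x ('i *: z) N + Im a * re_psum x z N + re_psum y ('i *: z) N.
Proof.
rewrite /re_psum !mulr_sumr -!big_split; apply: eq_bigr => k _ /=.
rewrite ipDl ipZl raddfD /= ReM Re_ipZr_i ipZr ImM /=; ring.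
Qed.

Lemma l2ip_linl a (x y z : l2) : l2ip (a *: x + y) z = a * l2ip x z + l2ip y z.
Proof.
have cv := @re_psum_cvg; apply: complexP; rewrite raddfD /= ?ReM ?ImM /= /l2re.
  rewrite (funext (re_psum_linl a x y z)); apply: cvg_lim => //.
  by apply: cvgD; [apply: cvgB; apply: cvgM|]; first [exact: cvg_cst | exact: cv].
rewrite (funext (re_psum_linl_i a x y z)); apply: cvg_lim => //.
by apply: cvgD; [apply: cvgD; apply: cvgM|]; first [exact: cvg_cst | exact: cv].
Qed.

Lemma l2ip_conj (x y : l2) : l2ip y x = conjc (l2ip x y).
Proof.
apply: complexP => /=; rewrite /l2re.
  suff -> : re_psum y x = re_psum x y by [].
  by apply/funext => N; apply: eq_bigr => k _; rewrite Re_ipC.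
suff -> : re_psum y ('i *: x) = fun N => - re_psum x ('i *: y) N.
  by apply: cvg_lim => //; apply: cvgN; exact: re_psum_cvg.
apply/funext => N; rewrite /re_psum -sumrN; apply: eq_bigr => k _ /=.
by rewrite !Re_ipZr_i ipC ImJ.
Qed.

Lemma l2re_self (x : l2) : l2re x x = limn (psum x).
Proof. by []. Qed.

Lemma psum_le_l2re (x : l2) N : psum x N <= l2re x x.
Proof. by rewrite l2re_self; apply: nondecreasing_cvgn_le; [exact: psum_nondecreasing | exact: psum_cvg]. Qed.

Lemma l2re_le (x : l2) C : (forall N, psum x N <= C) -> l2re x x <= C.
Proof. by move=> xC; apply: limr_le; [exact: psum_cvg | exact: nearW]. Qed.

Lemma l2ip_self_Im (x : l2) : l2re x ('i *: x) = 0.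
Proof.
rewrite /l2re (_ : re_psum _ _ = fun=> 0) ?lim_cst //.
apply/funext => N; rewrite /re_psum big1 // => k _ /=.
by rewrite Re_ipZr_i ip_self.
Qed.

Lemma l2ip_ge0 (x : l2) : 0 <= l2ip x x.
Proof.
rewrite lecE /= l2ip_self_Im eqxx /=.
exact: le_trans (psum_ge0 x 0) (psum_le_l2re x 0).
Qed.

Lemma l2ip_eq0 (x : l2) : l2ip x x = 0 -> x = 0.
Proof.
move=> /(congr1 (@complex.Re R)) /= x0; apply: l2_ext => k /=; apply: sqnorm_eq0.
have := psum_le_l2re x k.+1; rewrite x0 psumS.
by have := psum_ge0 x k; have := sqnorm_ge0 (x k); lra.
Qed.

Lemma cvg_psum (v : nat -> nat -> E) (l : nat -> E) M :
  (forall k, hnorm (v m k - l k) @[m --> \oo] --> 0) ->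
  psum (v m) M @[m --> \oo] --> psum l M.
Proof.
move=> vl; elim: M => [|M IH].
  by rewrite /psum big_ord0; under eq_fun do rewrite big_ord0; exact: cvg_cst.
by rewrite psumS; under eq_fun do rewrite psumS; apply: cvgD IH (cvg_sqnorm (vl M)).
Qed.

Section Completeness.
Variable u : nat -> l2.
Hypothesis u_cauchy : forall e : R, 0 < e ->
  exists N, forall m n, (N <= m)%N -> (N <= n)%N -> l2re (u m - u n) (u m - u n) < e.

Lemma l2_coord_cvg : exists l : nat -> E, forall k, hnorm (u n k - l k) @[n --> \oo] --> 0.
Proof.
suff /choice [l ul] : forall k, exists lk, hnorm (u n k - lk) @[n --> \oo] --> 0.
  by exists l.
move=> k; apply: hilbert_cvg => e /u_cauchy [N hN]; exists N => m n mN nN.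
apply: le_lt_trans (hN m n mN nN); apply: le_trans (psum_le_l2re _ k.+1).
by rewrite psumS lerDr psum_ge0.
Qed.

Variables (l : nat -> E) (ul : forall k, hnorm (u n k - l k) @[n --> \oo] --> 0).

Lemma l2_tail_le e : 0 < e ->
  exists N, forall n, (N <= n)%N -> forall M, psum (fun k => u n k - l k) M <= e.
Proof.
move=> /u_cauchy [N hN]; exists N => n nN M.
have unl k : hnorm ((u n k - u m k) - (u n k - l k)) @[m --> \oo] --> 0.
  suff -> : (fun m => hnorm ((u n k - u m k) - (u n k - l k))) =
            (fun m => hnorm (u m k - l k)) by exact: ul.
  apply/funext => m; rewrite -[RHS]hnormN; congr hnorm.
  by rewrite !opprB addrC addrA subrK.
apply: ler_cvg_to (cvg_psum (M := M) unl) (cvg_cst e) _.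
near=> m; have mN : (N <= m)%N by near: m; exact: nbhs_infty_ge.
exact/ltW/(le_lt_trans (psum_le_l2re (u n - u m) M) (hN n m nN mN)).
Unshelve. all: end_near.
Qed.

Lemma l2_limit_square_summable : square_summable l.
Proof.
have [N hN] := l2_tail_le ltr01; exists (2 * l2re (u N) (u N) + 2) => M.
have -> : psum l M = psum (u N \+ (fun k => l k - u N k)) M.
  by apply: eq_bigr => k _ /=; rewrite addrC subrK.
apply: le_trans (psumD_le _ _ M) _.
have -> : psum (fun k => l k - u N k) M = psum (fun k => u N k - l k) M.
  by apply: eq_bigr => k _; rewrite sqnormBC.
by have := psum_le_l2re (u N) M; have := hN N (leqnn _) M; lra.
Qed.

End Completeness.

Lemma l2_complete (u : nat -> l2) :
  (forall e : R, 0 < e -> exists N, forall m n, (N <= m)%N -> (N <= n)%N ->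
     Num.sqrt (Re (l2ip (u m - u n) (u m - u n))) < e) ->
  exists l, forall e : R, 0 < e -> exists N, forall n, (N <= n)%N ->
     Num.sqrt (Re (l2ip (u n - l) (u n - l))) < e.
Proof.
move=> u_cauchy.
have {}u_cauchy e : 0 < e -> exists N, forall m n, (N <= m)%N -> (N <= n)%N ->
    l2re (u m - u n) (u m - u n) < e.
  move=> e0; have := u_cauchy (Num.sqrt e); rewrite sqrtr_gt0 => /(_ e0) [N hN].
  by exists N => m n mN nN; rewrite -ltr_sqrt ?hN.
have [l ul] := l2_coord_cvg u_cauchy.
set l2_lim := L2 (l2_limit_square_summable u_cauchy ul); exists l2_lim => e e0.
have [N hN] := l2_tail_le u_cauchy ul (divr_gt0 (exprn_gt0 2 e0) (ltr0n _ 2)).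
exists N => n nN; rewrite -(ger0_norm (ltW e0)) -sqrtr_sqr ltr_sqrt ?exprn_gt0 //.
apply: le_lt_trans (l2re_le (x := u n - l2_lim) (hN n nN)) _.
by rewrite ltr_pdivrMr // ltr_pMr ?exprn_gt0 // ltr1n.
Qed.

Definition l2H : hilbert R := Hilbert l2ip_linl l2ip_conj l2ip_ge0 l2ip_eq0 l2_complete.

Lemma square_summable_cons (a : E) (x : l2) :
  square_summable (fun k => if k is k'.+1 then x k' else a).
Proof.
have [C xC] := l2seqP x; exists (sqnorm a + C) => -[|N].
  by rewrite /psum big_ord0 addr_ge0 ?sqnorm_ge0 // (le_trans (psum_ge0 x 0)).
by rewrite /psum big_ord_recl lerD2l; exact: xC.
Qed.

Definition l2cons (a : E) (x : l2H) : l2H := L2 (square_summable_cons a x).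

Lemma l2cons_lin b (a a' : E) (x x' : l2H) :
  l2cons (b *: a + a') (b *: x + x') = b *: l2cons a x + l2cons a' x'.
Proof. by apply: l2_ext => -[|k]. Qed.

Lemma re_psum_cons a b (x y : l2) N :
  re_psum (l2cons a x) (l2cons b y) N.+1 = Re [< a, b >] + re_psum x y N.
Proof. by rewrite /re_psum big_ord_recl. Qed.

Lemma ip_l2cons a b (x y : l2H) :
  [< l2cons a x, l2cons b y >] = [< a, b >] + [< x, y >].
Proof.
have cons_cvg a' b' (x' y' : l2) :
    re_psum (l2cons a' x') (l2cons b' y') N @[N --> \oo] -->
    Re [< a', b' >] + l2re x' y'.
  rewrite -cvg_shiftS /=; under eq_fun do rewrite re_psum_cons.
  by apply: cvgD; [exact: cvg_cst | exact: re_psum_cvg].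
apply: complexP; rewrite raddfD /=; first exact: cvg_lim (cons_cvg _ _ _ _).
have -> : 'i *: l2cons b y = l2cons ('i *: b) ('i *: y) by apply: l2_ext => -[|k].
by rewrite -Re_ipZr_i; exact: cvg_lim (cons_cvg _ _ _ _).
Qed.

Lemma sqnorm_l2cons a (x : l2H) : sqnorm (l2cons a x) = sqnorm a + sqnorm x.
Proof. by rewrite /sqnorm ip_l2cons raddfD. Qed.

End L2.

Section DirectSum.
Variables (R : realType) (H G : hilbert R).

Definition dsum_lmod : lmodType R[i] := (H * G)%type.

Definition dsum_ip (x y : dsum_lmod) : R[i] := [< x.1, y.1 >] + [< x.2, y.2 >].

Lemma dsum_ip_linl a (x y z : dsum_lmod) :
  dsum_ip (a *: x + y) z = a * dsum_ip x z + dsum_ip y z.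
Proof. by rewrite /dsum_ip /= !hinnerDl; ring. Qed.

Lemma dsum_ip_conj (x y : dsum_lmod) : dsum_ip y x = conjc (dsum_ip x y).
Proof. by rewrite /dsum_ip rmorphD /= -!ipC. Qed.

Lemma dsum_ip_ge0 (x : dsum_lmod) : 0 <= dsum_ip x x.
Proof. by rewrite addr_ge0 ?hinner_ge0. Qed.

Lemma Re_dsum_ip (x : dsum_lmod) : Re (dsum_ip x x) = sqnorm x.1 + sqnorm x.2.
Proof. by rewrite /dsum_ip raddfD. Qed.

Lemma dsum_ip_eq0 (x : dsum_lmod) : dsum_ip x x = 0 -> x = 0.
Proof.
move=> x0; have : Re (dsum_ip x x) = 0 by rewrite x0.
rewrite Re_dsum_ip => s0; have := sqnorm_ge0 x.1; have := sqnorm_ge0 x.2 => s2 s1.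
have /sqnorm_eq0 e1 : sqnorm x.1 = 0 by lra.
have /sqnorm_eq0 e2 : sqnorm x.2 = 0 by lra.
by case: x {x0 s0 s1 s2} e1 e2 => a b /= -> ->.
Qed.

Lemma dsum_complete (u : nat -> dsum_lmod) :
  (forall e : R, 0 < e -> exists N, forall m n, (N <= m)%N -> (N <= n)%N ->
     Num.sqrt (Re (dsum_ip (u m - u n) (u m - u n))) < e) ->
  exists l, forall e : R, 0 < e -> exists N, forall n, (N <= n)%N ->
     Num.sqrt (Re (dsum_ip (u n - l) (u n - l))) < e.
Proof.
move=> u_cauchy.
have {}u_cauchy e : 0 < e -> exists N, forall m n, (N <= m)%N -> (N <= n)%N ->
    sqnorm (u m - u n).1 + sqnorm (u m - u n).2 < e.
  move=> e0; have := u_cauchy (Num.sqrt e); rewrite sqrtr_gt0 => /(_ e0) [N hN].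
  by exists N => m n mN nN; rewrite -Re_dsum_ip -ltr_sqrt ?hN.
have [l1 ul1] : exists l1, hnorm ((u n).1 - l1) @[n --> \oo] --> 0.
  apply: hilbert_cvg => e /u_cauchy [N hN]; exists N => m n mN nN.
  by have := hN m n mN nN; have := sqnorm_ge0 (u m - u n).2; rewrite /=; lra.
have [l2 ul2] : exists l2, hnorm ((u n).2 - l2) @[n --> \oo] --> 0.
  apply: hilbert_cvg => e /u_cauchy [N hN]; exists N => m n mN nN.
  by have := hN m n mN nN; have := sqnorm_ge0 (u m - u n).1; rewrite /=; lra.
exists ((l1, l2) : dsum_lmod) => e e0.
have to0 (K : hilbert R) (v : nat -> K) l : hnorm (v n - l) @[n --> \oo] --> 0 ->
    sqnorm (v n - l) @[n --> \oo] --> 0.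
  move=> vl; rewrite -(sqnorm0 K); apply: cvg_sqnorm.
  by under eq_fun do rewrite subr0.
have u0 : sqnorm ((u n).1 - l1) + sqnorm ((u n).2 - l2) @[n --> \oo] --> 0.
  by rewrite -[0]addr0; apply: cvgD; apply: to0.
have [N _ hN] := (cvgr0Pnorm_lt _).1 u0 _ (exprn_gt0 2 e0).
exists N => n /hN; rewrite ger0_norm ?addr_ge0 ?sqnorm_ge0 // => small.
by rewrite Re_dsum_ip -(ger0_norm (ltW e0)) -sqrtr_sqr ltr_sqrt ?exprn_gt0.
Qed.

Definition dsum : hilbert R :=
  Hilbert dsum_ip_linl dsum_ip_conj dsum_ip_ge0 dsum_ip_eq0 dsum_complete.

Lemma ip_dsum (x y : dsum) : [< x, y >] = [< x.1, y.1 >] + [< x.2, y.2 >].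
Proof. by []. Qed.

Lemma sqnorm_dsum (x : dsum) : sqnorm x = sqnorm x.1 + sqnorm x.2.
Proof. exact: Re_dsum_ip. Qed.

End DirectSum.

(** * Factorization of positive operators *)

Section PositiveContraction.
Variables (R : realType) (H : hilbert R).
Implicit Types (B : H -> H) (x y : H).

Definition qform B x := Re [< B x, x >].

Definition selfadjoint B := forall x y, [< B x, y >] = [< x, B y >].

Definition pos_contraction B :=
  [/\ is_linear B, selfadjoint B, forall x, 0 <= qform B x & forall x, qform B x <= sqnorm x].

Lemma qformDZ B x y (t : R) : is_linear B -> selfadjoint B ->
  qform B (x + t%:C *: y) = qform B x + 2 * t * Re [< B x, y >] + t ^+ 2 * qform B y.
Proof.
move=> B_lin B_sa; have e : Re [< B y, x >] = Re [< B x, y >] by rewrite B_sa Re_ipC.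
rewrite /qform (is_linearD B_lin) (is_linearZ B_lin) !ipDl !ipDr !raddfD /=.
by rewrite !Re_ipZl !Re_ipZr e; ring.
Qed.

Lemma sqnorm_le_qform B x : pos_contraction B -> sqnorm (B x) <= qform B x.
Proof.
case=> B_lin B_sa B_ge0 B_le1.
have : Re [< B x, B x >] ^+ 2 <= qform B x * qform B (B x).
  by apply: quadratic_ge0 (B_ge0 _) _ => t; rewrite -qformDZ.
rewrite -/(sqnorm _) => h; have := B_le1 (B x); have := B_ge0 x.
have := sqnorm_ge0 (B x); rewrite !expr2 in h *; nra.
Qed.

Definition contraction_step B x := B x - B (B x).

Lemma qform_step B x : pos_contraction B ->
  qform (contraction_step B) x = qform B x - sqnorm (B x).
Proof. by case=> _ B_sa _ _; rewrite /qform /contraction_step ipBl raddfB /= (B_sa (B x)). Qed.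

Lemma pos_contraction_step B : pos_contraction B -> pos_contraction (contraction_step B).
Proof.
move=> B_pc; have Bx_le x : sqnorm (B x) <= qform B x by exact: sqnorm_le_qform.
case: (B_pc) => B_lin B_sa B_ge0 B_le1.
split=> [a x y|x y|x|x]; rewrite ?qform_step ?subr_ge0 //.
- by rewrite /contraction_step !B_lin scalerBr opprD addrACA.
- by rewrite /contraction_step ipBl ipBr !B_sa.
- by have := sqnorm_ge0 (B x); have := B_le1 x; lra.
Qed.

(* For 0 <= B <= 1, the iterates B_(k+1) = B_k - B_k^2 of B_0 = B satisfy
   sum_k |B_k x|^2 = <B x, x>, which factors B through l2(H) without
   taking a square root. *)
Section Factorization.
Variables (B : H -> H) (B_pc : pos_contraction B).

Let Bk k := iter k contraction_step B.

Let Bk_pc k : pos_contraction (Bk k).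
Proof. by elim: k => [|k IH] //=; exact: pos_contraction_step. Qed.

Let psum_Bk x N : psum (fun k => Bk k x) N = qform B x - qform (Bk N) x.
Proof.
elim: N => [|N IH]; first by rewrite /psum big_ord0 subrr.
by rewrite psumS IH /= qform_step //; ring.
Qed.

Let square_summable_Bk x : square_summable (fun k => Bk k x).
Proof.
by exists (qform B x) => N; rewrite psum_Bk gerBl; case: (Bk_pc N).
Qed.

Definition contraction_factor x : l2H H := L2 (square_summable_Bk x).

Lemma contraction_factor_lin : is_linear contraction_factor.
Proof. by move=> a x y; apply: l2_ext => k /=; case: (Bk_pc k) => ->. Qed.

Lemma sqnorm_contraction_factor x : sqnorm (contraction_factor x) = qform B x.
Proof.
set u := fun k => Bk k x; set L := sqnorm (contraction_factor x).
have psum_L : psum u N @[N --> \oo] --> L by exact: psum_cvg (contraction_factor x).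
have u_to0 : sqnorm (u N) @[N --> \oo] --> 0.
  have -> : (fun N => sqnorm (u N)) = (fun N => psum u N.+1 - psum u N).
    by apply/funext => N; rewrite psumS addrAC subrr add0r.
  by rewrite -(subrr L); apply: cvgB => //; rewrite (cvg_shiftS (psum u)).
set m := qform B x - L.
have m_le N : m <= qform (Bk N) x.
  have : psum u N <= L := psum_le_l2re (contraction_factor x) N.
  by rewrite psum_Bk /m; lra.
have m_ge0 : 0 <= m.
  rewrite subr_ge0; apply: l2re_le => N.
  by rewrite [psum _ _]psum_Bk gerBl; case: (Bk_pc N).
have : m ^+ 2 <= sqnorm x * 0.
  apply: ler_cvg_to (cvg_cst _) (cvgM (cvg_cst _) u_to0) _; near=> N.
  rewrite /= mulrC; apply: le_trans _ (Re_ip_sqr_le (u N) x).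
  by rewrite ler_sqr ?nnegrE ?m_le // (le_trans m_ge0 (m_le N)).
by rewrite mulr0 => m2; apply/eqP; rewrite eq_sym -subr_eq0 -/m -sqrf_eq0 eq_le m2 sqr_ge0.
Unshelve. all: end_near.
Qed.

End Factorization.

Lemma positive_factorization (D : H -> H) (c : R) :
  is_linear D -> selfadjoint D -> (forall x, 0 <= qform D x) ->
  (forall x, qform D x <= c * sqnorm x) ->
  exists defect_factor : H -> l2H H, is_linear defect_factor /\ forall x, sqnorm (defect_factor x) = qform D x.
Proof.
move=> D_lin D_sa D_ge0 D_le; set s := `|c| + 1.
have s_gt0 : 0 < s by rewrite ltr_pwDr.
pose A x := s^-1%:C *: D x.
have qform_A x : qform A x = s^-1 * qform D x by rewrite /qform Re_ipZl.
have A_pc : pos_contraction A.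
  split=> [a x y|x y|x|x].
  - by rewrite /A D_lin scalerDr !scalerA mulrC.
  - rewrite /A ipZl ipZr D_sa; congr (_ * _); apply: complexP => /=; lra.
  - by rewrite -/A qform_A; apply: mulr_ge0; [rewrite invr_ge0 ltW | exact: D_ge0].
  - rewrite -/A qform_A ler_pdivrMl // (le_trans (D_le x)) // ler_wpM2r ?sqnorm_ge0 //.
    by rewrite -[leLHS]addr0 (lerD (ler_norm c)) // ler_wpDl ?ler01.
exists (fun x => (Num.sqrt s)%:C *: contraction_factor A_pc x); split.
  by move=> a x y; rewrite contraction_factor_lin scalerDr !scalerA mulrC.
move=> x; rewrite sqnormZr sqnorm_contraction_factor qform_A sqr_sqrtr ?ltW //.
by rewrite mulVKf ?gt_eqF.
Qed.

End PositiveContraction.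

(** * Two-isometric liftings *)

Section TwoIsometry.
Variables (R : realType) (K : hilbert R) (S : K -> K).
Hypotheses (S_lin : is_linear S) (S_bd : is_bounded S).

Let SsP := adjointP S_lin S_bd.

Lemma two_isometry_sqnorm :
  two_isometry S <-> forall x, sqnorm (S (S x)) - 2 * sqnorm (S x) + sqnorm x = 0.
Proof.
have ip_defect x y : [< y, adjoint S (adjoint S (S (S x))) - 2%:R *: adjoint S (S x) + x >] =
    [< S (S y), S (S x) >] - 2%:R * [< S y, S x >] + [< y, x >].
  by rewrite !ipDr ipNr ipZr -!SsP conjC_nat.
split=> [S2 x|S2 Ss x].
  have := congr1 (@complex.Re R) (ip_defect x x); rewrite S2 ip0r /=.
  by rewrite !raddfD raddfN /= ReM Re_nat Im_nat mul0r subr0 => <-.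
apply: ip_inj => y; rewrite ip0r.
have Re_defect z : Re [< z, adjoint S (adjoint S (S (S x))) - 2%:R *: adjoint S (S x) + x >] = 0.
  rewrite ip_defect !raddfD raddfN /= ReM Re_nat Im_nat mul0r subr0.
  have := S2 (z + x); rewrite !(is_linearD S_lin) !sqnormD.
  by have := S2 z; have := S2 x; lra.
apply: complexP; first exact: Re_defect.
by have := Re_defect ('i *: y); rewrite ipZl ReM /=; lra.
Qed.

End TwoIsometry.

Section IsometricEmbedding.
Variables (R : realType) (H K : hilbert R) (J : H -> K).
Hypothesis J_iso : isometric_embedding J.

Lemma sqnorm_isometric x : sqnorm (J x) = sqnorm x.
Proof. by rewrite /sqnorm J_iso.2. Qed.

Lemma isometric_bounded : is_bounded J.
Proof. by apply/is_boundedP; exists 1; split=> // x; rewrite mul1r sqnorm_isometric. Qed.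

Let JsP := adjointP J_iso.1 isometric_bounded.

Lemma isometric_inj : injective J.
Proof.
move=> x y Jxy; apply/eqP; rewrite -subr_eq0; apply/eqP/sqnorm_eq0.
by rewrite -sqnorm_isometric (is_linearB J_iso.1) Jxy subrr sqnorm0.
Qed.

Lemma adjoint_isometricK : cancel J (adjoint J).
Proof. by move=> x; apply: ip_inj => y; rewrite -JsP J_iso.2. Qed.

Lemma sqnorm_adjoint_isometric_le k : sqnorm (adjoint J k) <= sqnorm k.
Proof.
have : hnorm (adjoint J k) ^+ 2 <= hnorm (adjoint J k) * hnorm k.
  rewrite sqr_hnorm /sqnorm -JsP; apply: le_trans (Re_ip_le _ _) _.
  by rewrite !hnormE sqnorm_isometric.
rewrite -!sqr_hnorm; have := hnorm_ge0 (adjoint J k); have := hnorm_ge0 k; nra.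
Qed.

End IsometricEmbedding.

Definition two_isometric_liftable (R : realType) (H : hilbert R) (T : H -> H) :=
  exists (K : hilbert R) (J : H -> K) (S : bop K K), lifting_via J T S /\ two_isometry S.

Definition compl_isometric_liftable (R : realType) (H : hilbert R) (T : H -> H) :=
  exists (K : hilbert R) (J : H -> K) (S : bop K K),
    [/\ lifting_via J T S, two_isometry S & orth_compl_in_ker J S].

Definition sqr_opnorm_linear_growth (R : realType) (H : hilbert R) (T : H -> H) :=
  exists M : R, forall n : nat, opnorm (iter n T) ^+ 2 / (n.+1)%:R <= M.

Lemma compl_isometric_liftable_liftable (R : realType) (H : hilbert R) (T : H -> H) :
  compl_isometric_liftable T -> two_isometric_liftable T.
Proof. by move=> [K [J [S [JTS S2 _]]]]; exists K, J, S. Qed.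

Section LiftingBound.
Variables (R : realType) (H K : hilbert R) (J : H -> K) (T : bop H H) (S : bop K K).
Hypotheses (JTS : lifting_via J T S) (S2 : two_isometry S).

Lemma lifting_iter n k : iter n T (adjoint J k) = adjoint J (iter n S k).
Proof.
case: JTS => J_iso JTS_eq; elim: n => [|n IH] //=.
by rewrite IH; apply: (isometric_inj J_iso); exact: JTS_eq.
Qed.

Lemma two_isometry_iter_sqnorm : exists C, 0 <= C /\
  forall n k, sqnorm (iter n S k) <= n.+1%:R * C * sqnorm k.
Proof.
have [C [C0 SC]] := (is_boundedP S).1 (bop_bounded S).
have S2n := (two_isometry_sqnorm (bop_linear S) (bop_bounded S)).1 S2.
exists (1 + C); split=> [|n k]; first by rewrite addr_ge0.
have := second_difference_eq0 (a := fun n => sqnorm (iter n S k)) (fun n => S2n _) n.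
rewrite /= => ->; have := SC k; have := sqnorm_ge0 k; have := sqnorm_ge0 (S k).
have := ler0n R n; rewrite -natr1; nra.
Qed.

Lemma lifting_opnorm_bound : sqr_opnorm_linear_growth T.
Proof.
have [C [C0 SC]] := two_isometry_iter_sqnorm.
exists C => n; rewrite ler_pdivrMr ?ltr0Sn // mulrC.
apply: (opnorm_sqr_le (iter_bounded n (bop_bounded T))) => [|h].
  by rewrite mulr_ge0 ?ler0n.
have J_iso := JTS.1.
rewrite -[in X in X <= _](adjoint_isometricK J_iso h) lifting_iter.
apply: le_trans (sqnorm_adjoint_isometric_le J_iso _) _.
by rewrite -(sqnorm_isometric J_iso h) SC.
Qed.

End LiftingBound.

Lemma two_isometric_liftable_growth (R : realType) (H : hilbert R) (T : bop H H) :
  two_isometric_liftable T -> sqr_opnorm_linear_growth T.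
Proof. by move=> [K [J [S [JTS S2]]]]; exact: lifting_opnorm_bound JTS S2. Qed.

Section Construction.
Variables (R : realType) (H : hilbert R) (T : bop H H) (M : R).
Hypotheses (T_convex : convex_op T)
           (T_growth : forall n : nat, opnorm (iter n T) ^+ 2 / (n.+1)%:R <= M).

Let T_lin := bop_linear T.
Let TsP := adjointP T_lin (bop_bounded T).

Definition convex_defect x := adjoint T (adjoint T (T (T x))) - 2%:R *: adjoint T (T x) + x.

Lemma ip_convex_defect x y :
  [< convex_defect x, y >] = [< T (T x), T (T y) >] - 2%:R * [< T x, T y >] + [< x, y >].
Proof. by rewrite /convex_defect !ipDl ipNl ipZl !(is_adjointC TsP). Qed.

Lemma qform_convex_defect x : qform convex_defect x = sqnorm (T (T x)) - 2 * sqnorm (T x) + sqnorm x.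
Proof. by rewrite /qform ip_convex_defect !raddfD raddfN /= ReM Re_nat Im_nat mul0r subr0. Qed.

Lemma convex_defect_lin : is_linear convex_defect.
Proof.
move=> a x y; apply: ip_injl => z; rewrite ip_convex_defect [RHS]ipDl ipZl !ip_convex_defect.
by rewrite !(is_linearD T_lin, is_linearZ T_lin) !ipDl !ipZl; ring.
Qed.

Lemma convex_defect_selfadjoint : selfadjoint convex_defect.
Proof.
move=> x y; rewrite [RHS]ipC !ip_convex_defect rmorphD rmorphB rmorphM rmorph_nat.
by rewrite /= -!ipC.
Qed.

Lemma qform_convex_defect_ge0 x : 0 <= qform convex_defect x.
Proof. by have := T_convex x; rewrite lecE => /andP[]. Qed.

Lemma qform_convex_defect_le : exists c, forall x, qform convex_defect x <= c * sqnorm x.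
Proof.
have [C [C0 TC]] := (is_boundedP T).1 (bop_bounded T).
exists (C * C + 1) => x; rewrite qform_convex_defect.
have := TC (T x); have := TC x; have := sqnorm_ge0 (T x) => ? ? ?.
have : C * sqnorm (T x) <= C * (C * sqnorm x) by rewrite ler_wpM2l.
lra.
Qed.

Let defect_factorization :=
  cid (positive_factorization convex_defect_lin convex_defect_selfadjoint qform_convex_defect_ge0
         (projT2 (cid qform_convex_defect_le))).

Definition defect_factor := projT1 defect_factorization.

Lemma defect_factor_lin : is_linear defect_factor. Proof. exact: (projT2 defect_factorization).1. Qed.

Lemma sqnorm_defect_factor x : sqnorm (defect_factor x) = qform convex_defect x.
Proof. exact: (projT2 defect_factorization).2. Qed.

Lemma sqnorm_iter_le h n : sqnorm (iter n T h) <= `|M| * sqnorm h * n.+1%:R.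
Proof.
apply: le_trans (sqnorm_le_opnorm (iter_linear n T_lin) (iter_bounded n (bop_bounded T)) h) _.
rewrite [leRHS]mulrAC; apply: ler_wpM2r; first exact: sqnorm_ge0.
have := T_growth n; rewrite ler_pdivrMr ?ltr0Sn // => /le_trans; apply.
by apply: ler_wpM2r; [exact: ler0n | exact: ler_norm].
Qed.

Lemma psum_defect_factor_le h N : psum (fun n => defect_factor (iter n T h)) N <= (2 * `|M| + 1) * sqnorm h.
Proof.
set a := fun n => sqnorm (iter n T h).
have qform_a n : qform convex_defect (iter n T h) = a n.+2 - 2 * a n.+1 + a n.
  by rewrite qform_convex_defect.
have telescope : psum (fun n => defect_factor (iter n T h)) N = a N.+1 - a N - (a 1%N - a 0%N).
  rewrite /psum -(big_mkord xpredT (fun n => sqnorm (defect_factor (iter n T h)))).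
  rewrite -(telescope_sumr (fun n => a n.+1 - a n) (leq0n N)).
  by apply: eq_big_nat => n _; rewrite sqnorm_defect_factor qform_a; ring.
have a_convex n : a n.+1 - a n <= a n.+2 - a n.+1.
  by have := qform_convex_defect_ge0 (iter n T h); rewrite qform_a; lra.
have := convex_seq_step_le a_convex (fun n => sqnorm_ge0 _) (sqnorm_iter_le h) N.
rewrite telescope; have := sqnorm_ge0 (T h); rewrite /a /=; lra.
Qed.

Lemma square_summable_orbit h : square_summable (fun n => defect_factor (iter n T h)).
Proof. by exists ((2 * `|M| + 1) * sqnorm h) => N; exact: psum_defect_factor_le. Qed.

Definition orbit_factor h : l2H (l2H H) := L2 (square_summable_orbit h).

Lemma orbit_factor_lin : is_linear orbit_factor.
Proof. by move=> a x y; apply: l2_ext => n /=; rewrite (iter_linear n T_lin) defect_factor_lin. Qed.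

Lemma orbit_factor_cons h : orbit_factor h = l2cons (defect_factor h) (orbit_factor (T h)).
Proof. by apply: l2_ext => -[|n] //=; rewrite -iterSr. Qed.

Lemma sqnorm_orbit_factor_le h : sqnorm (orbit_factor h) <= (2 * `|M| + 1) * sqnorm h.
Proof. by apply: l2re_le => N; exact: psum_defect_factor_le. Qed.

Definition lift_space : hilbert R := dsum H (l2H (l2H (l2H H))).

Definition lift_fun (k : lift_space) : lift_space := (T k.1, l2cons (orbit_factor k.1) k.2).

Lemma lift_lin : is_linear lift_fun.
Proof.
move=> a x y; rewrite /lift_fun /=; congr (_, _); first exact: T_lin.
by rewrite orbit_factor_lin l2cons_lin.
Qed.

Lemma sqnorm_lift k : sqnorm (lift_fun k) = sqnorm (T k.1) + sqnorm (orbit_factor k.1) + sqnorm k.2.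
Proof. by rewrite sqnorm_dsum /= sqnorm_l2cons addrA. Qed.

Lemma lift_bounded : is_bounded lift_fun.
Proof.
have [C [C0 TC]] := (is_boundedP T).1 (bop_bounded T).
apply/is_boundedP; exists (C + (2 * `|M| + 1) + 1); split=> [|k].
  by rewrite !addr_ge0 ?mulr_ge0.
rewrite sqnorm_lift sqnorm_dsum; have := TC k.1; have := sqnorm_orbit_factor_le k.1.
have := sqnorm_ge0 k.1; have := sqnorm_ge0 k.2; have := normr_ge0 M; nra.
Qed.

Definition lift : bop lift_space lift_space := Bop lift_lin lift_bounded.

Definition lift_embed (h : H) : lift_space := (h, 0).

Lemma ip_lift y k : [< lift y, lift k >] =
  [< T y.1, T k.1 >] + [< orbit_factor y.1, orbit_factor k.1 >] + [< y.2, k.2 >].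
Proof. by rewrite ip_dsum (ip_l2cons (orbit_factor y.1) (orbit_factor k.1)) addrA. Qed.

Lemma lift_embed_iso : isometric_embedding lift_embed.
Proof.
split=> [a x y|x y]; last by rewrite ip_dsum ip0l addr0.
rewrite /lift_embed /=; congr (_, _).
by change (0 = a *: (0 : l2H (l2H (l2H H))) + 0); rewrite scaler0 addr0.
Qed.

Lemma lift_embed_adjoint : adjoint lift_embed =1 fst.
Proof.
apply: adjointE (lift_embed_iso.1) (isometric_bounded lift_embed_iso) _ => x k.
by rewrite ip_dsum ip0l addr0.
Qed.

Lemma convex_lifting : compl_isometric_liftable T.
Proof.
have liftP := adjointP lift_lin lift_bounded.
exists lift_space, lift_embed, lift; split.
- by split=> [|k]; [exact: lift_embed_iso | rewrite !lift_embed_adjoint].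
- apply/two_isometry_sqnorm; [exact: lift_lin | exact: lift_bounded |] => k.
  rewrite !sqnorm_lift sqnorm_l2cons /= sqnorm_dsum (orbit_factor_cons k.1) sqnorm_l2cons.
  by rewrite sqnorm_defect_factor qform_convex_defect; lra.
- move=> k k_orth; have k1 : k.1 = 0.
    by apply: hinner_eq0; have := k_orth k.1; rewrite ip_dsum ip0r addr0.
  apply/eqP; rewrite subr_eq0; apply/eqP; apply: ip_inj => y.
  rewrite -liftP ip_lift k1 (is_linear0 T_lin) (is_linear0 orbit_factor_lin) !ip0r !add0r.
  by rewrite ip_dsum k1 ip0r add0r.
Qed.

End Construction.

Lemma convex_growth_liftable (R : realType) (H : hilbert R) (T : bop H H) :
  convex_op T -> sqr_opnorm_linear_growth T -> compl_isometric_liftable T.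
Proof. by move=> T_convex [M T_growth]; exact: convex_lifting T_convex T_growth. Qed.

Unset Implicit Arguments.

Theorem theorem3p2 (R : realType) (H : hilbert R) (T : bop H H) :
  convex_op T ->
  [/\ ((exists (K : hilbert R) (J : H -> K) (S : bop K K),
          lifting_via J T S /\ two_isometry S) <->
       (exists (K : hilbert R) (J : H -> K) (S : bop K K),
          [/\ lifting_via J T S, two_isometry S & orth_compl_in_ker J S])),
      ((exists (K : hilbert R) (J : H -> K) (S : bop K K),
          [/\ lifting_via J T S, two_isometry S & orth_compl_in_ker J S]) <->
       (exists M : R, forall n : nat,
          opnorm (iter n T) ^+ 2 / (n.+1)%:R <= M))
    & ((exists M : R, forall n : nat,
          opnorm (iter n T) ^+ 2 / (n.+1)%:R <= M) <->
       (exists (K : hilbert R) (J : H -> K) (S : bop K K),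
          lifting_via J T S /\ two_isometry S))].
Proof.
move=> T_convex.
have i_iii := @two_isometric_liftable_growth R H T.
have iii_ii := convex_growth_liftable T_convex.
have ii_i := @compl_isometric_liftable_liftable R H T.
by split; split=> h; [exact: iii_ii (i_iii h) | exact: ii_i h | exact: i_iii (ii_i h)
  | exact: iii_ii h | exact: ii_i (iii_ii h) | exact: i_iii h].
Qed.
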